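(* Let $X$ and $Y$ be nontrivial real Banach spaces. (a) If $X^*$ has the weak$^*$ diameter $2$ property, then $(X\oplus_1 Y)^*$ has the weak$^*$ diameter $2$ property. (b) If $X^*$ and $Y^*$ have the weak$^*$ diameter $2$ property and $1<p\leq\infty$, then $(X\oplus_p Y)^*$ has the weak$^*$ diameter $2$ property. (c) If $(X\oplus_p Y)^*$ has the weak$^*$ diameter $2$ property, where $1<p\leq\infty$, then $X^*$ has the weak$^*$ diameter $2$ property.
   Context: For $1\le p<\infty$, $X\oplus_p Y$ is $X\times Y$ with norm $(\|x\|^p+\|y\|^p)^{1/p}$; $X\oplus_\infty Y$ has norm $\max\{\|x\|,\|y\|\}$. For a Banach space $Z$, $Z^*$ has the weak$^*$ diameter $2$ property if every nonempty relatively weak$^*$ open subset of the closed unit ball $B_{Z^*}$ has diameter $2$. *)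

From HB Require Import structures.
From mathcomp Require Import all_boot all_order all_algebra.
From mathcomp Require Import all_classical all_reals all_analysis.
Set Implicit Arguments. Unset Strict Implicit. Unset Printing Implicit Defensive.
Import Order.TTheory GRing.Theory Num.Theory.
Import numFieldNormedType.Exports.
Local Open Scope classical_set_scope.
Local Open Scope ring_scope.

Section Dual.
Variables (R : realType) (V : lmodType R) (N : V -> R).

Definition is_dual (f : V -> R) : Prop :=
  (forall (a : R) (u v : V), f (a *: u + v) = a * f u + f v) /\
  exists C : R, forall x, `|f x| <= C * N x.

Definition dnorm (f : V -> R) : R := sup [set `|f x| | x in [set x | N x <= 1]].

Definition dual_ball : set (V -> R) := [set f | is_dual f /\ dnorm f <= 1].

(* W is a relatively weak* open subset of the dual unit ball: W is open for the
   trace on the ball of the weak* topology (initial topology of the evaluations) *)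
Definition wstar_rel_open (W : set (V -> R)) : Prop :=
  W `<=` dual_ball /\
  forall f, W f -> exists (s : seq V) (e : R), 0 < e /\
    [set g | dual_ball g /\ forall x, x \in s -> `|g x - f x| < e] `<=` W.

Definition dual_diam (W : set (V -> R)) : R :=
  sup [set r | exists f g, W f /\ W g /\ r = dnorm (f \- g)].

Definition wstar_d2p : Prop :=
  forall W, wstar_rel_open W -> W !=set0 -> dual_diam W = 2.

End Dual.

Definition psum_norm (R : realType) (X Y : normedModType R) (p : \bar R)
  (z : (X * Y)%type) : R :=
  match p with
  | +oo%E => Num.max `|z.1| `|z.2|
  | (r%:E)%E => (`|z.1| `^ r + `|z.2| `^ r) `^ r^-1
  | -oo%E => 0
  end.
Arguments psum_norm {R} X Y p z.

(* (a) For h = (f, g) in a relatively weak* open set W, pull W back along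
   u |-> (u, g): this is a relatively weak* open subset of the ball of X^*
   containing f, so it contains u1, u2 with u1 - u2 of norm almost 2 at some x,
   and (u1, g) - (u2, g) is then almost 2 at (x, 0).
   (b) Write h = (al u, b v) with u, v in the unit balls and (al, b) on the unit
   sphere of the dual of l_p^2 (raising |f| to al if needed).  Choose u1, u2 far
   apart near u at x, then v1, v2 far apart at y with (al u_i, b v_j) in W, and
   test the difference at (lam x, mu y), where (lam, mu) norms (al, b).
   (c) As the l_p^2 norm is flat at (1, 0) for p > 1, a functional of the ball of
   (X + Y)^* almost normed by (x', 0) is small on Y.  Hence lifting a weak* open
   set of the ball of X^* that meets the slice of x' and restricting far-apart
   points back to X gives far-apart points.  Any nonempty such open set meets a
   slice: move along f1 + t (g1 - g2), with g1, g2 far apart near f1 / |f1|,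
   until the norm reaches 1 (intermediate values); Hahn-Banach makes f1 nonzero. *)

From HB Require Import structures.
From mathcomp Require Import all_boot all_order all_algebra.
From mathcomp Require Import all_classical all_reals all_analysis.
From mathcomp Require Import ring lra.
Import Order.TTheory GRing.Theory Num.Theory.
Import numFieldNormedType.Exports.
Local Open Scope classical_set_scope.
Local Open Scope ring_scope.
Set Implicit Arguments. Unset Strict Implicit. Unset Printing Implicit Defensive.

(* No triangle inequality is required: the estimates below only use
   homogeneity and definiteness. *)
Definition normlike (R : realType) (V : lmodType R) (N : V -> R) :=
  [/\ (forall x, 0 <= N x), (forall (a : R) x, N (a *: x) = `|a| * N x) &
  (forall x, N x = 0 -> x = 0)].

Lemma normlike_normr (R : realType) (V : normedModType R) :
  normlike (fun x : V => `|x|).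
Proof. by split => [x|a x|x]; [exact: normr_ge0|exact: normrZ|exact: normr0_eq0]. Qed.

Lemma lipschitz_continuous (R : realType) (F : R -> R) (K : R) : 0 <= K ->
  (forall s t, `|F s - F t| <= K * `|s - t|) -> continuous F.
Proof.
move=> K0 F_lip x; apply/cvgrPdist_lt => e e_gt0.
have K1_gt0 : 0 < K + 1 by rewrite ltr_wpDl.
near=> t; apply: le_lt_trans (F_lip x t) _.
have xt : `|x - t| < e / (K + 1).
  near: t; apply: filterS (near_ball x (e / (K + 1)) (divr_gt0 e_gt0 K1_gt0)) => t.
  by rewrite -ball_normE.
apply: (le_lt_trans (y := K * (e / (K + 1)))); first by rewrite ler_wpM2l // ltW.
by rewrite mulrA ltr_pdivrMr // mulrC ltr_pM2l // ltrDl.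
Unshelve. all: by end_near.
Qed.

Section DualNorm.
Context (R : realType) (V : lmodType R) (N : V -> R).
Hypothesis N_normlike : normlike N.
Let N_ge0 : forall x, 0 <= N x. Proof. by case: N_normlike. Qed.
Let NZ : forall (a : R) x, N (a *: x) = `|a| * N x. Proof. by case: N_normlike. Qed.
Let N_eq0 : forall x, N x = 0 -> x = 0. Proof. by case: N_normlike. Qed.

Lemma normlike0 : N 0 = 0.
Proof. by rewrite -(scale0r 0) NZ normr0 mul0r. Qed.

Lemma normlikeN x : N (- x) = N x.
Proof. by rewrite -scaleN1r NZ normrN normr1 mul1r. Qed.

Section DualFunctional.
Variable f : V -> R.
Hypothesis f_dual : is_dual N f.

Lemma dualD u v : f (u + v) = f u + f v.
Proof. by case: f_dual => lin _; rewrite -{1}(scale1r u) lin mul1r. Qed.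

Lemma dual0 : f 0 = 0.
Proof. by have /eqP := dualD 0 0; rewrite addr0 -subr_eq subrr eq_sym => /eqP. Qed.

Lemma dualZ a u : f (a *: u) = a * f u.
Proof. by case: f_dual => lin _; rewrite -(addr0 (a *: u)) lin dual0 addr0. Qed.

Lemma dualN u : f (- u) = - f u.
Proof. by rewrite -scaleN1r dualZ mulN1r. Qed.

Let dual_has_ubound : has_ubound [set `|f x| | x in [set x | N x <= 1]].
Proof.
case: f_dual => _ [C HC]; exists `|C| => _ [x /= Nx1 <-].
apply: le_trans (HC x) _; apply: le_trans (ler_norm _) _.
by rewrite normrM (ger0_norm (N_ge0 x)) ler_piMr.
Qed.

Lemma ler_dnorm x : N x <= 1 -> `|f x| <= dnorm N f.
Proof. by move=> Nx1; apply: ub_le_sup dual_has_ubound _ _; exists x. Qed.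

Lemma is_dual_dnorm_ge0 : 0 <= dnorm N f.
Proof. by apply: le_trans (ler_dnorm (x := 0) _); rewrite ?normlike0// dual0 normr0. Qed.

Lemma dnorm_gt t : t < dnorm N f -> exists x, N x <= 1 /\ t < f x.
Proof.
move=> /(sup_gt _) [].
  by exists `|f 0|, 0 => //=; rewrite normlike0.
move=> _ [x /= Nx1 <-] tfx.
have [fx0|fx0] := leP 0 (f x).
  by exists x; split => //; rewrite -(ger0_norm fx0).
by exists (- x); rewrite normlikeN dualN -(ltr0_norm fx0).
Qed.

Lemma ler_dnormM x : `|f x| <= dnorm N f * N x.
Proof.
have [/N_eq0->|Nx0] := eqVneq (N x) 0.
  by rewrite dual0 normr0 mulr_ge0 ?is_dual_dnorm_ge0.
have Nx_gt0 : 0 < N x by rewrite lt_neqAle eq_sym Nx0 N_ge0.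
have := ler_dnorm (x := (N x)^-1 *: x).
rewrite NZ dualZ normrM ger0_norm ?invr_ge0 ?N_ge0 // mulVf // lexx => /(_ isT).
by rewrite ler_pdivrMl // mulrC.
Qed.

End DualFunctional.

Lemma dnorm_le (f : V -> R) c : (forall x, N x <= 1 -> `|f x| <= c) -> dnorm N f <= c.
Proof.
move=> fc; apply: ge_sup; first by exists `|f 0|, 0 => //=; rewrite normlike0.
by move=> _ [x /= Nx1 <-]; exact: fc.
Qed.

Lemma is_dual_lincomb (f g : V -> R) a b : is_dual N f -> is_dual N g ->
  is_dual N (fun x => a * f x + b * g x).
Proof.
move=> fd gd; split.
  by move=> c u v; rewrite (dualD fd) (dualD gd) (dualZ fd) (dualZ gd); ring.
exists (`|a| * dnorm N f + `|b| * dnorm N g) => x.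
rewrite mulrDl; apply: le_trans (ler_normD _ _) _; rewrite !normrM -!mulrA.
by apply: lerD; apply: ler_wpM2l => //; apply: ler_dnormM.
Qed.

Lemma dnorm_lincomb (f g : V -> R) a b : is_dual N f -> is_dual N g ->
  dnorm N (fun x => a * f x + b * g x) <= `|a| * dnorm N f + `|b| * dnorm N g.
Proof.
move=> fd gd; apply: dnorm_le => x Nx1; apply: le_trans (ler_normD _ _) _.
by rewrite !normrM; apply: lerD; apply: ler_wpM2l => //; apply: ler_dnorm.
Qed.

Lemma is_dualZ (f : V -> R) c : is_dual N f -> is_dual N (fun x => c * f x).
Proof.
move=> fd; have := is_dual_lincomb c 0 fd fd.
by congr is_dual; apply: funext => x; rewrite mul0r addr0.
Qed.

Lemma is_dualB (f g : V -> R) : is_dual N f -> is_dual N g -> is_dual N (f \- g).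
Proof.
move=> fd gd; have := is_dual_lincomb 1 (-1) fd gd.
by congr is_dual; apply: funext => x /=; rewrite mul1r mulN1r.
Qed.

Lemma ler_dnormB (f g : V -> R) : is_dual N f -> is_dual N g ->
  dnorm N (f \- g) <= dnorm N f + dnorm N g.
Proof.
move=> fd gd; have := dnorm_lincomb 1 (-1) fd gd; rewrite normrN normr1 !mul1r.
by congr (_ <= _); congr dnorm; apply: funext => x /=; rewrite mul1r mulN1r.
Qed.

Lemma dual_ball_normalize (f : V -> R) c : is_dual N f -> dnorm N f <= c ->
  dual_ball N (fun x => c^-1 * f x) /\ forall x, c * (c^-1 * f x) = f x.
Proof.
move=> fd fc; have c0 : 0 <= c := le_trans (is_dual_dnorm_ge0 fd) fc.
split; last first.
  move=> x; have [c_eq0|c_neq0] := eqVneq c 0; last by rewrite mulrA mulfV ?mul1r.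
  rewrite c_eq0 mul0r; apply/esym/eqP; rewrite -normr_le0.
  apply: le_trans (ler_dnormM fd x) _.
  by rewrite mulr_le0_ge0 ?N_ge0 // -c_eq0.
split; first exact: is_dualZ.
apply: dnorm_le => x Nx1; rewrite normrM ger0_norm ?invr_ge0 //.
have [->|c_neq0] := eqVneq c 0; first by rewrite invr0 mul0r.
rewrite ler_pdivrMl ?lt_neqAle 1?eq_sym ?c_neq0 // mulr1.
exact: le_trans (ler_dnorm fd Nx1) fc.
Qed.

Lemma dual_nonpos_eq0 (f : V -> R) : is_dual N f ->
  (forall w, N w <= 1 -> f w <= 0) -> forall x, f x = 0.
Proof.
move=> fd f_le0; have f_dnorm0 : dnorm N f <= 0.
  apply: dnorm_le => x x1; rewrite ler_norml f_le0 // andbT lerNl -(dualN fd).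
  by rewrite f_le0 // normlikeN.
move=> x; apply/eqP; rewrite -normr_le0; apply: le_trans (ler_dnormM fd x) _.
by rewrite mulr_le0_ge0.
Qed.

Lemma dual_ball0 : dual_ball N (fun=> 0).
Proof.
split; last by apply: dnorm_le => x _; rewrite normr0.
by split=> [a u v|]; [rewrite mulr0 addr0 | exists 0 => x; rewrite normr0 mul0r].
Qed.

Lemma dnorm_ivt (f psi : V -> R) : is_dual N f -> is_dual N psi ->
  dnorm N f < 1 -> 1 + dnorm N f < dnorm N psi ->
  exists2 t, 0 <= t <= 1 &
    is_dual N (fun x => f x + t * psi x) /\ dnorm N (fun x => f x + t * psi x) = 1.
Proof.
move=> fd psid f_lt1 psi_gt.
pose F t := dnorm N (fun x => 1 * f x + t * psi x).
have Fd t : is_dual N (fun x => 1 * f x + t * psi x) := is_dual_lincomb 1 t fd psid.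
have F_le s t : F s <= F t + `|s - t| * dnorm N psi.
  have := dnorm_lincomb 1 (s - t) (Fd t) psid; rewrite normr1 mul1r.
  suff -> : (fun x => 1 * (1 * f x + t * psi x) + (s - t) * psi x) =
    fun x => 1 * f x + s * psi x by [].
  by apply: funext => x; ring.
have F_lip s t : `|F s - F t| <= dnorm N psi * `|s - t|.
  by rewrite ler_norml; have := F_le s t; have := F_le t s; rewrite (distrC t s); lra.
have F0 : F 0 = dnorm N f.
  by rewrite /F; congr dnorm; apply: funext => x; rewrite mul1r mul0r addr0.
have F1 : dnorm N psi <= F 1 + dnorm N f.
  have := dnorm_lincomb 1 (-1) (Fd 1) fd; rewrite normr1 normrN normr1 !mul1r.
  suff -> : (fun x => 1 * (1 * f x + 1 * psi x) + -1 * f x) = psi by [].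
  by apply: funext => x; ring.
have [t t01 Ft] : exists2 t, t \in `[0, 1] & F t = 1.
  apply: IVT; first exact: ler01.
    exact/continuous_subspaceT/(lipschitz_continuous (is_dual_dnorm_ge0 psid) F_lip).
  by rewrite ge_min le_max F0 (ltW f_lt1) /=; apply/orP; right; lra.
have gE : (fun x => 1 * f x + t * psi x) = fun x => f x + t * psi x.
  by apply: funext => x; rewrite mul1r.
by exists t; [move: t01; rewrite in_itv | rewrite -gE; split].
Qed.

Lemma dual_ball_diam_le2 (f g : V -> R) : dual_ball N f -> dual_ball N g ->
  dnorm N (f \- g) <= 2.
Proof.
move=> [fd f1] [gd g1]; apply: le_trans (ler_dnormB fd gd) _.
by rewrite -[2]/(1 + 1); apply: lerD.
Qed.

End DualNorm.

Lemma seq_margin (T : eqType) (R : realType) (s : seq T) (F : T -> R) e :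
  (forall x, x \in s -> F x < e) ->
  exists2 d, 0 < d & forall x, x \in s -> F x + d <= e.
Proof.
elim: s => [|a s IHs] Fe; first by exists 1.
have [d d_gt0 Fd] : exists2 d, 0 < d & forall x, x \in s -> F x + d <= e.
  by apply: IHs => x xs; apply: Fe; rewrite in_cons xs orbT.
have Fa : F a < e by apply: Fe; rewrite in_cons eqxx.
exists (Num.min d (e - F a)); first by rewrite lt_min d_gt0 subr_gt0.
move=> x; rewrite in_cons => /orP[/eqP->|xs].
  by rewrite -lerBrDl ge_min lexx orbT.
by apply: le_trans (Fd x xs); rewrite lerD2l ge_min lexx.
Qed.

Lemma seq_ubound (T : eqType) (R : realType) (s : seq T) (F : T -> R) :
  exists2 M, 0 <= M & forall x, x \in s -> F x <= M.
Proof.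
elim: s => [|a s [M M0 FM]]; first by exists 0.
exists (Num.max M (F a)); first by rewrite le_max M0.
move=> x; rewrite in_cons => /orP[/eqP->|xs]; first by rewrite le_max lexx orbT.
by rewrite le_max FM.
Qed.

Section WeakStarOpen.
Context (R : realType) (V : lmodType R) (N : V -> R).

Lemma wstar_nbhd_open (f : V -> R) (s : seq V) e :
  wstar_rel_open N [set g | dual_ball N g /\ forall x, x \in s -> `|g x - f x| < e].
Proof.
split; first by move=> g [].
move=> g [gB gs]; have [d d_gt0 gd] := seq_margin gs.
exists s, d; split => // k [kB ks]; split => // x xs.
apply: lt_le_trans (gd x xs).
rewrite -(subrK (g x) (k x)) -addrA addrC; apply: le_lt_trans (ler_normD _ _) _.
by rewrite addrC ltrD2l ks.
Qed.

Lemma wstar_slice_open (x0 : V) c :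
  wstar_rel_open N [set g | dual_ball N g /\ c < g x0].
Proof.
split; first by move=> g [].
move=> g [gB gc]; exists [:: x0], (g x0 - c); split; first by rewrite subr_gt0.
move=> k [kB /(_ x0)]; rewrite mem_head => /(_ isT) kx0; split => //.
by move: kx0; rewrite ltr_norml => /andP[+ _]; lra.
Qed.

Lemma wstar_openI (W1 W2 : set (V -> R)) :
  wstar_rel_open N W1 -> wstar_rel_open N W2 -> wstar_rel_open N (W1 `&` W2).
Proof.
move=> [W1B W1o] [_ W2o]; split; first by move=> g [/W1B].
move=> g [/W1o [s1 [e1 [e1_gt0 sub1]]] /W2o [s2 [e2 [e2_gt0 sub2]]]].
exists (s1 ++ s2), (Num.min e1 e2); split; first by rewrite lt_min e1_gt0.
move=> k [kB ks]; split; [apply: sub1|apply: sub2]; split => // x xs;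
  apply: lt_le_trans (ks x _) _; rewrite ?mem_cat ?xs ?orbT // ge_min lexx ?orbT //.
Qed.

Lemma wstar_d2p_far : normlike N -> wstar_d2p N ->
  forall W f, wstar_rel_open N W -> W f -> forall d, 0 < d ->
  exists g1 g2 x, [/\ W g1, W g2, N x <= 1 & 2 - d < g1 x - g2 x].
Proof.
move=> Nn d2p W f Wo Wf d d_gt0; have := d2p W Wo (ex_intro _ f Wf).
rewrite /dual_diam => diam2.
have : 2 - d < sup [set r | exists f g, W f /\ W g /\ r = dnorm N (f \- g)].
  by rewrite diam2 ltrBlDr ltrDl.
move/sup_gt => []; first by exists (dnorm N (f \- f)), f, f.
move=> _ [g1 [g2 [Wg1 [Wg2 ->]]]].
move/(dnorm_gt Nn (is_dualB Nn (Wo.1 _ Wg1).1 (Wo.1 _ Wg2).1)) => [x [x1 far]].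
by exists g1, g2, x; split.
Qed.

Lemma wstar_d2p_intro : normlike N ->
  (forall W f, wstar_rel_open N W -> W f -> forall d, 0 < d ->
    exists g1 g2, [/\ W g1, W g2 & 2 - d <= dnorm N (g1 \- g2)]) ->
  wstar_d2p N.
Proof.
move=> Nn far W Wo [f Wf]; rewrite /dual_diam.
have diam_le2 : ubound [set r | exists f g, W f /\ W g /\ r = dnorm N (f \- g)] 2.
  by move=> _ [g1 [g2 [Wg1 [Wg2 ->]]]]; exact: dual_ball_diam_le2 (Wo.1 _ Wg1) (Wo.1 _ Wg2).
apply/eqP; rewrite eq_le; apply/andP; split.
  by apply: ge_sup => //; exists (dnorm N (f \- f)), f, f.
apply/ler_addgt0Pr => d d_gt0; have [g1 [g2 [Wg1 Wg2 gd]]] := far W f Wo Wf d d_gt0.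
rewrite -lerBlDr; apply: le_trans gd _.
by apply: ub_le_sup; [exists 2 | exists g1, g2].
Qed.

End WeakStarOpen.

Section WeakStarPullback.
Context (R : realType) (V1 V2 : lmodType R) (N1 : V1 -> R) (N2 : V2 -> R).
Variables (Phi : (V1 -> R) -> (V2 -> R)) (pi : V2 -> V1) (c : R) (G : V2 -> R).
Hypothesis PhiE : forall u z, Phi u z = c * u (pi z) + G z.
Hypothesis Phi_ball : forall u, dual_ball N1 u -> dual_ball N2 (Phi u).

Lemma wstar_open_pullback (W : set (V2 -> R)) : wstar_rel_open N2 W ->
  wstar_rel_open N1 [set u | dual_ball N1 u /\ W (Phi u)].
Proof.
move=> [WB Wo]; split; first by move=> u [].
move=> u [uB /Wo [s [e [e_gt0 sub]]]].
have c1_gt0 : 0 < `|c| + 1 by rewrite ltr_wpDl.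
exists (map pi s), (e / (`|c| + 1)); split; first by rewrite divr_gt0.
move=> g [gB gs]; split => //; apply: sub; split; first exact: Phi_ball.
move=> z zs; rewrite !PhiE opprD addrACA subrr addr0 -mulrBr normrM.
apply: (le_lt_trans (y := `|c| * (e / (`|c| + 1)))).
  by apply: ler_wpM2l => //; apply/ltW/gs/map_f.
by rewrite mulrA ltr_pdivrMr // mulrC ltr_pM2l // ltrDl.
Qed.

End WeakStarPullback.

(* [pnorm2 p u v] is the l_p norm of (u, v) for u, v >= 0; the case -oo is junk. *)
Definition pnorm2 (R : realType) (p : \bar R) (u v : R) : R :=
  match p with
  | +oo%E => Num.max u v
  | (r%:E)%E => (u `^ r + v `^ r) `^ r^-1
  | -oo%E => 0
  end.

Lemma psum_normE (R : realType) (X Y : normedModType R) p z :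
  psum_norm X Y p z = pnorm2 p `|z.1| `|z.2|.
Proof. by case: p. Qed.

Section PNorm2.
Context (R : realType) (p : \bar R).
Hypothesis p_ge1 : (1%:E <= p)%E.

Let exponent_gt0 (r : R) : (1%:E <= r%:E)%E -> 0 < r.
Proof. by rewrite lee_fin; apply: lt_le_trans ltr01. Qed.

Lemma pnorm2_ge0 u v : 0 <= u -> 0 <= v -> 0 <= pnorm2 p u v.
Proof.
by case: p p_ge1 => [r||] //= _ u0 v0; [exact: powR_ge0 | rewrite le_max u0].
Qed.

Lemma pnorm2_u0 u : 0 <= u -> pnorm2 p u 0 = u.
Proof.
case: p p_ge1 => [r /exponent_gt0 r0|_|] //= u0; last by rewrite max_l.
by rewrite powR0 ?gt_eqF // addr0 -powRrM mulfV ?gt_eqF // powRr1.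
Qed.

Lemma pnorm2_0v v : 0 <= v -> pnorm2 p 0 v = v.
Proof.
case: p p_ge1 => [r /exponent_gt0 r0|_|] //= v0; last by rewrite max_r.
by rewrite powR0 ?gt_eqF // add0r -powRrM mulfV ?gt_eqF // powRr1.
Qed.

Lemma pnorm2M s u v : 0 <= s -> 0 <= u -> 0 <= v ->
  pnorm2 p (s * u) (s * v) = s * pnorm2 p u v.
Proof.
case: p p_ge1 => [r /exponent_gt0 r0|_|] //= s0 u0 v0; last first.
  by have [uv|/ltW vu] := leP u v; [rewrite !max_r | rewrite !max_l]; rewrite ?ler_wpM2l.
rewrite !powRM // -mulrDr powRM ?addr_ge0 ?powR_ge0 //.
by rewrite -powRrM mulfV ?gt_eqF // powRr1.
Qed.

Lemma ler_pnorm2 u u' v v' : 0 <= u -> 0 <= v -> u <= u' -> v <= v' ->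
  pnorm2 p u v <= pnorm2 p u' v'.
Proof.
case: p p_ge1 => [r /exponent_gt0 r0|_|] //= u0 v0 uu' vv'; last first.
  by rewrite ge_max !le_max uu' vv' orbT.
have powr_le a b : 0 <= a -> a <= b -> a `^ r <= b `^ r.
  by move=> a0 ab; apply: ge0_ler_powR; rewrite ?nnegrE ?(ltW r0) // (le_trans a0).
apply: ge0_ler_powR; rewrite ?invr_ge0 ?nnegrE ?addr_ge0 ?powR_ge0 ?(ltW r0) //.
by apply: lerD; apply: powr_le.
Qed.

Lemma pnorm2_ge_l u v : 0 <= u -> 0 <= v -> u <= pnorm2 p u v.
Proof. by move=> u0 v0; rewrite -{1}(pnorm2_u0 u0) ler_pnorm2. Qed.

Lemma pnorm2_ge_r u v : 0 <= u -> 0 <= v -> v <= pnorm2 p u v.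
Proof. by move=> u0 v0; rewrite -{1}(pnorm2_0v v0) ler_pnorm2. Qed.

End PNorm2.

Definition pnorm2_dual_ball (R : realType) (p : \bar R) (a b : R) :=
  forall s t, 0 <= s -> 0 <= t -> a * s + b * t <= pnorm2 p s t.

Section PSumNorm.
Context (R : realType) (X Y : normedModType R) (p : \bar R).
Hypothesis p_ge1 : (1%:E <= p)%E.
Local Notation N := (psum_norm X Y p).

Lemma psum_norm_ge0 z : 0 <= N z.
Proof. by rewrite psum_normE pnorm2_ge0. Qed.

Lemma psum_normZ (a : R) z : N (a *: z) = `|a| * N z.
Proof. by rewrite !psum_normE /= !normrZ pnorm2M. Qed.

Lemma psum_norm_ge_fst z : `|z.1| <= N z.
Proof. by rewrite psum_normE pnorm2_ge_l. Qed.

Lemma psum_norm_ge_snd z : `|z.2| <= N z.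
Proof. by rewrite psum_normE pnorm2_ge_r. Qed.

Lemma psum_norm_eq0 z : N z = 0 -> z = 0.
Proof.
case: z => x y Nz; have := psum_norm_ge_fst (x, y); have := psum_norm_ge_snd (x, y).
by rewrite Nz /= !normr_le0 => /eqP-> /eqP->.
Qed.

Lemma psum_norm_x0 x : N (x, 0) = `|x|.
Proof. by rewrite psum_normE /= normr0 pnorm2_u0. Qed.

Lemma psum_norm_0y y : N (0, y) = `|y|.
Proof. by rewrite psum_normE /= normr0 pnorm2_0v. Qed.

Lemma normlike_psum : normlike N.
Proof. by split; [exact: psum_norm_ge0 | exact: psum_normZ | exact: psum_norm_eq0]. Qed.

End PSumNorm.

Section ProductDual.
Context (R : realType) (X Y : normedModType R).

Definition dfst (h : X * Y -> R) : X -> R := fun x => h (x, 0).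
Definition dsnd (h : X * Y -> R) : Y -> R := fun y => h (0, y).
Definition dsum (a : R) (u : X -> R) (b : R) (v : Y -> R) : X * Y -> R :=
  fun z => a * u z.1 + b * v z.2.

Variable p : \bar R.
Hypothesis p_ge1 : (1%:E <= p)%E.
Local Notation N := (psum_norm X Y p).
Local Notation NX := (fun x : X => `|x|).
Local Notation NY := (fun y : Y => `|y|).
Let N_normlike := normlike_psum X Y p_ge1.

Section Restriction.
Variable h : X * Y -> R.
Hypothesis h_dual : is_dual N h.

Lemma is_dual_dfst : is_dual NX (dfst h).
Proof.
split => [a x x'|]; last first.
  by exists (dnorm N h) => x; rewrite -(psum_norm_x0 Y p_ge1) (ler_dnormM N_normlike).
rewrite /dfst; have -> : ((a *: x + x', 0) : X * Y) = a *: (x, 0) + (x', 0).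
  by apply/eqP; rewrite xpair_eqE /= ?scaler0 ?addr0 ?add0r !eqxx.
by rewrite (dualD h_dual) (dualZ h_dual).
Qed.

Lemma is_dual_dsnd : is_dual NY (dsnd h).
Proof.
split => [a y y'|]; last first.
  by exists (dnorm N h) => y; rewrite -(psum_norm_0y X p_ge1) (ler_dnormM N_normlike).
rewrite /dsnd; have -> : ((0, a *: y + y') : X * Y) = a *: (0, y) + (0, y').
  by apply/eqP; rewrite xpair_eqE /= ?scaler0 ?addr0 ?add0r !eqxx.
by rewrite (dualD h_dual) (dualZ h_dual).
Qed.

Lemma dnorm_dfst : dnorm NX (dfst h) <= dnorm N h.
Proof.
apply: (dnorm_le (normlike_normr X)) => x x1.
by apply: (ler_dnorm N_normlike h_dual); rewrite psum_norm_x0.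
Qed.

Lemma dnorm_dsnd : dnorm NY (dsnd h) <= dnorm N h.
Proof.
apply: (dnorm_le (normlike_normr Y)) => y y1.
by apply: (ler_dnorm N_normlike h_dual); rewrite psum_norm_0y.
Qed.

Lemma dual_pairZ a b x y : h (a *: x, b *: y) = a * dfst h x + b * dsnd h y.
Proof.
have -> : (a *: x, b *: y) = a *: (x, 0) + b *: (0, y).
  by apply/eqP; rewrite xpair_eqE /= ?scaler0 ?addr0 ?add0r !eqxx.
by rewrite (dualD h_dual) !(dualZ h_dual).
Qed.

Lemma dual_dsum : h = dsum 1 (dfst h) 1 (dsnd h).
Proof. by apply: funext => -[x y]; rewrite /dsum /= -dual_pairZ !scale1r. Qed.

End Restriction.

Lemma dual_ball_dfst h : dual_ball N h -> dual_ball NX (dfst h).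
Proof. by case=> hd h1; split; [exact: is_dual_dfst | exact: le_trans (dnorm_dfst hd) h1]. Qed.

Lemma dual_ball_dsnd h : dual_ball N h -> dual_ball NY (dsnd h).
Proof. by case=> hd h1; split; [exact: is_dual_dsnd | exact: le_trans (dnorm_dsnd hd) h1]. Qed.

Lemma is_dual_dsum a u b v : is_dual NX u -> is_dual NY v -> is_dual N (dsum a u b v).
Proof.
move=> ud vd; split.
  by move=> c z w /=; rewrite /dsum (dualD ud) (dualD vd) (dualZ ud) (dualZ vd); ring.
exists (`|a| * dnorm NX u + `|b| * dnorm NY v) => z; rewrite mulrDl.
apply: le_trans (ler_normD _ _) _; rewrite !normrM -!mulrA.
apply: lerD; apply: ler_wpM2l => //.
  apply: le_trans (ler_dnormM (normlike_normr X) ud _) _.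
  by apply: ler_wpM2l; [exact (is_dual_dnorm_ge0 (normlike_normr X) ud) | exact: psum_norm_ge_fst].
apply: le_trans (ler_dnormM (normlike_normr Y) vd _) _.
by apply: ler_wpM2l; [exact (is_dual_dnorm_ge0 (normlike_normr Y) vd) | exact: psum_norm_ge_snd].
Qed.

Lemma dual_ball_dsum a u b v : 0 <= a -> 0 <= b -> pnorm2_dual_ball p a b ->
  dual_ball NX u -> dual_ball NY v -> dual_ball N (dsum a u b v).
Proof.
move=> a0 b0 ab_ball [ud u1] [vd v1]; split; first exact: is_dual_dsum.
apply: (dnorm_le N_normlike) => z Nz1; apply: le_trans Nz1.
apply: le_trans (ler_normD _ _) _; rewrite !normrM (ger0_norm a0) (ger0_norm b0).
apply: (le_trans (y := a * `|z.1| + b * `|z.2|)); last first.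
  by rewrite psum_normE ab_ball.
apply: lerD; apply: ler_wpM2l => //.
  by apply: le_trans (ler_dnormM (normlike_normr X) ud _) _; rewrite ler_piMl.
by apply: le_trans (ler_dnormM (normlike_normr Y) vd _) _; rewrite ler_piMl.
Qed.

Lemma wstar_open_dsum_fst a b v W : 0 <= a -> 0 <= b -> pnorm2_dual_ball p a b ->
  dual_ball NY v -> wstar_rel_open N W ->
  wstar_rel_open NX [set u | dual_ball NX u /\ W (dsum a u b v)].
Proof.
move=> a0 b0 ab vB; apply: (@wstar_open_pullback _ _ _ _ _ (fun u => dsum a u b v) fst a
  (fun z => b * v z.2) (fun _ _ => erefl)) => u uB.
exact: dual_ball_dsum.
Qed.

Lemma wstar_open_dsum_snd a b u W : 0 <= a -> 0 <= b -> pnorm2_dual_ball p a b ->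
  dual_ball NX u -> wstar_rel_open N W ->
  wstar_rel_open NY [set v | dual_ball NY v /\ W (dsum a u b v)].
Proof.
move=> a0 b0 ab uB; apply: (@wstar_open_pullback _ _ _ _ _ (fun v => dsum a u b v) snd b
  (fun z => a * u z.1) (fun _ _ => addrC _ _)) => v vB.
exact: dual_ball_dsum.
Qed.

End ProductDual.

Section PSum1.
Context (R : realType) (X Y : normedModType R).
Local Notation N := (psum_norm X Y 1%:E).
Local Notation NX := (fun x : X => `|x|).
Let p_ge1 : (1%:E <= (1%:E : \bar R))%E. Proof. by []. Qed.
Let N_normlike := normlike_psum X Y p_ge1.

Lemma wstar_d2p_psum1 : wstar_d2p NX -> wstar_d2p N.
Proof.
move=> d2pX; apply: (wstar_d2p_intro N_normlike) => W h0 Wo Wh0 d d_gt0.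
have h0B := Wo.1 _ Wh0.
have ball11 : pnorm2_dual_ball (1%:E : \bar R) 1 1.
  by move=> s t s0 t0; rewrite !mul1r /pnorm2 invr1 !powRr1 ?addr_ge0.
have U_open := wstar_open_dsum_fst p_ge1 ler01 ler01 ball11 (dual_ball_dsnd p_ge1 h0B) Wo.
have U_f0 : dual_ball NX (dfst h0) /\ W (dsum 1 (dfst h0) 1 (dsnd h0)).
  by split; [exact: dual_ball_dfst | rewrite -(dual_dsum h0B.1)].
have [u1 [u2 [x [[_ Wu1] [_ Wu2] x1 far]]]] :=
  wstar_d2p_far (normlike_normr X) d2pX U_open U_f0 d_gt0.
exists (dsum 1 u1 1 (dsnd h0)), (dsum 1 u2 1 (dsnd h0)); split => //.
apply: ltW (lt_le_trans far _).
have -> : u1 x - u2 x = (dsum 1 u1 1 (dsnd h0) \- dsum 1 u2 1 (dsnd h0)) (x, 0).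
  by rewrite /dsum /=; ring.
have Dd := is_dualB N_normlike (Wo.1 _ Wu1).1 (Wo.1 _ Wu2).1.
by apply: le_trans (ler_norm _) (ler_dnorm N_normlike Dd _); rewrite psum_norm_x0.
Qed.

End PSum1.

Definition pnorm2_dual_ge1 (R : realType) (p : \bar R) (a b : R) :=
  forall t, 0 < t -> exists lam mu,
    [/\ 0 <= lam, 0 <= mu, pnorm2 p lam mu <= 1 & 1 - t < a * lam + b * mu].

Section PNorm2Dual.
Context (R : realType) (p : \bar R).
Hypothesis p_ge1 : (1%:E <= p)%E.

Lemma pnorm2_dual_ball_le1 a b : pnorm2_dual_ball p a b -> a <= 1.
Proof. by move=> ab; have := ab 1 0 ler01 (lexx 0); rewrite mulr1 mulr0 addr0 pnorm2_u0. Qed.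

Lemma not_pnorm2_dual_ball a b t : 0 < t -> ~ pnorm2_dual_ball p (a + t) b ->
  exists lam mu, [/\ 0 <= lam, 0 <= mu, pnorm2 p lam mu <= 1 & 1 - t < a * lam + b * mu].
Proof.
move=> t_gt0 not_ball.
have [u [v [u0 v0 uv_gt]]] :
    exists u v, [/\ 0 <= u, 0 <= v & pnorm2 p u v < (a + t) * u + b * v].
  apply: contrapT => none; apply: not_ball => u v u0 v0; rewrite leNgt.
  by apply/negP => lt; apply: none; exists u, v.
have n_gt0 : 0 < pnorm2 p u v.
  rewrite lt_neqAle pnorm2_ge0 // andbT; apply: contraTneq uv_gt => n0.
  have u_eq0 : u = 0 by apply/le_anti; rewrite u0 andbT n0 pnorm2_ge_l.
  have v_eq0 : v = 0 by apply/le_anti; rewrite v0 andbT n0 pnorm2_ge_r.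
  by rewrite -n0 u_eq0 v_eq0 !mulr0 addr0 ltxx.
pose n := pnorm2 p u v.
exists (n^-1 * u), (n^-1 * v); split; rewrite ?mulr_ge0 ?invr_ge0 ?(ltW n_gt0) //.
  by rewrite pnorm2M ?invr_ge0 ?(ltW n_gt0) // mulVf ?gt_eqF.
have lam_le1 : n^-1 * u <= 1 by rewrite ler_pdivrMl // mulr1 pnorm2_ge_l.
have tlam : t * (n^-1 * u) <= t by rewrite ler_piMr // ltW.
have : 1 < (a + t) * (n^-1 * u) + b * (n^-1 * v).
  by rewrite mulrCA (mulrCA b) -mulrDr ltr_pdivlMl // mulr1.
rewrite mulrDl; lra.
Qed.

Lemma pnorm2_dual_ball_extend a b : pnorm2_dual_ball p a b ->
  exists2 al, a <= al & pnorm2_dual_ball p al b /\ pnorm2_dual_ge1 p al b.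
Proof.
move=> ab; pose A := [set al | pnorm2_dual_ball p al b].
have A_ub : ubound A 1 by move=> al; exact: pnorm2_dual_ball_le1.
have A_sup : has_sup A by split; [exists a | exists 1].
exists (sup A); first by apply: ub_le_sup (ab : A a); exists 1.
split=> [u v u0 v0|t t_gt0]; last first.
  apply: not_pnorm2_dual_ball => // /(ub_le_sup (ex_intro _ 1 A_ub)); lra.
apply/ler_addgt0Pr => e e_gt0.
have u1_gt0 : 0 < u + 1 by rewrite ltr_wpDl.
have [al al_ball al_gt] := sup_adherent (divr_gt0 e_gt0 u1_gt0) A_sup.
apply: (le_trans (y := al * u + b * v + e)); last by rewrite lerD2r al_ball.
rewrite addrAC lerD2r.
have : sup A * u <= (al + e / (u + 1)) * u by rewrite ler_wpM2r // ltW // -ltrBlDr.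
move/le_trans; apply; rewrite mulrDl lerD2l mulrAC ler_pdivrMr //.
by rewrite ler_pM2l //; lra.
Qed.

End PNorm2Dual.

Section PSumDual.
Context (R : realType) (X Y : normedModType R) (p : \bar R).
Hypothesis p_ge1 : (1%:E <= p)%E.
Local Notation N := (psum_norm X Y p).
Local Notation NX := (fun x : X => `|x|).
Local Notation NY := (fun y : Y => `|y|).
Let N_normlike := normlike_psum X Y p_ge1.

Lemma pnorm2_dual_ball_dnorm h : dual_ball N h ->
  pnorm2_dual_ball p (dnorm NX (dfst h)) (dnorm NY (dsnd h)).
Proof.
move=> [hd h1] s t s0 t0.
have h_le x y : `|x| <= 1 -> `|y| <= 1 -> s * dfst h x + t * dsnd h y <= pnorm2 p s t.
  move=> x1 y1; rewrite -(dual_pairZ hd); apply: le_trans (ler_norm _) _.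
  apply: le_trans (ler_dnormM N_normlike hd _) _.
  apply: le_trans (ler_piMl (psum_norm_ge0 p_ge1 _) h1) _.
  by rewrite psum_normE /= !normrZ !ger0_norm // ler_pnorm2 ?mulr_ge0 // ler_piMr.
apply/ler_addgt0Pr => e e_gt0.
pose k := e / (s + t + 1).
have st1_gt0 : 0 < s + t + 1 by rewrite ltr_wpDl // addr_ge0.
have k_gt0 : 0 < k by rewrite divr_gt0.
have below c : c - k < c by rewrite ltrBlDr ltrDl.
have [x [x1 fx]] := dnorm_gt (normlike_normr X) (is_dual_dfst p_ge1 hd) (below _).
have [y [y1 gy]] := dnorm_gt (normlike_normr Y) (is_dual_dsnd p_ge1 hd) (below _).
have := h_le x y x1 y1.
have : k * (s + t) <= e by rewrite /k mulrAC ler_pdivrMr // ler_pM2l //; lra.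
have : dnorm NX (dfst h) * s <= (dfst h x + k) * s by rewrite ler_wpM2r // -lerBlDr ltW.
have : dnorm NY (dsnd h) * t <= (dsnd h y + k) * t by rewrite ler_wpM2r // -lerBlDr ltW.
lra.
Qed.

Lemma dual_ball_psum_decompose h : dual_ball N h -> exists al b,
  [/\ 0 <= al, 0 <= b, pnorm2_dual_ball p al b & pnorm2_dual_ge1 p al b] /\
  exists us vs, [/\ dual_ball NX us, dual_ball NY vs & h = dsum al us b vs].
Proof.
move=> hB; have [hd _] := hB.
have fd := is_dual_dfst p_ge1 hd; have gd := is_dual_dsnd p_ge1 hd.
have [al a_le [ab_ball ab_ge1]] := pnorm2_dual_ball_extend p_ge1 (pnorm2_dual_ball_dnorm hB).
have a0 := is_dual_dnorm_ge0 (normlike_normr X) fd.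
pose b := dnorm NY (dsnd h).
have [usB usE] := dual_ball_normalize (normlike_normr X) fd a_le.
have [vsB vsE] := dual_ball_normalize (normlike_normr Y) gd (lexx b).
exists al, b; split.
  by split => //; [exact: le_trans a0 a_le | exact (is_dual_dnorm_ge0 (normlike_normr Y) gd)].
exists (fun x => al^-1 * dfst h x), (fun y => b^-1 * dsnd h y); split; [exact: usB | exact: vsB |].
by rewrite {1}(dual_dsum hd); apply: funext => z; rewrite /dsum usE vsE !mul1r.
Qed.

Lemma wstar_d2p_psum : wstar_d2p NX -> wstar_d2p NY -> wstar_d2p N.
Proof.
move=> d2pX d2pY; apply: (wstar_d2p_intro N_normlike) => W h0 Wo Wh0 d d_gt0.
pose e := Num.min d 1.
have e_gt0 : 0 < e by rewrite lt_min d_gt0 ltr01.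
have [e_le1 e_led] : e <= 1 /\ e <= d by split; rewrite ge_min lexx ?orbT.
have [al [b [[al0 b0 ab_ball ab_ge1] [us [vs [usB vsB h0E]]]]]] :=
  dual_ball_psum_decompose (Wo.1 _ Wh0).
have Wus : W (dsum al us b vs) by rewrite -h0E.
have U_open := wstar_open_dsum_fst p_ge1 al0 b0 ab_ball vsB Wo.
have [u1 [u2 [x [[u1B Wu1] [u2B Wu2] x1 far_x]]]] :=
  wstar_d2p_far (normlike_normr X) d2pX U_open (conj usB Wus) (divr_gt0 e_gt0 (ltr0n _ 2)).
have V_open := wstar_openI (wstar_open_dsum_snd p_ge1 al0 b0 ab_ball u1B Wo)
  (wstar_open_dsum_snd p_ge1 al0 b0 ab_ball u2B Wo).
have [v1 [v2 [y [[[v1B Wv1] _] [_ [v2B Wv2]] y1 far_y]]]] :=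
  wstar_d2p_far (normlike_normr Y) d2pY V_open (conj (conj vsB Wu1) (conj vsB Wu2))
    (divr_gt0 e_gt0 (ltr0n _ 2)).
have [lam [mu [lam0 mu0 lm1 lm_gt]]] := ab_ge1 _ (divr_gt0 e_gt0 (ltr0n _ 4)).
exists (dsum al u1 b v1), (dsum al u2 b v2); split => //.
have z1 : N (lam *: x, mu *: y) <= 1.
  rewrite psum_normE /= !normrZ !ger0_norm //; apply: le_trans lm1.
  by rewrite ler_pnorm2 ?mulr_ge0 // ler_piMr.
have Dd := is_dualB N_normlike (Wo.1 _ Wv1).1 (Wo.1 _ Wv2).1.
apply: le_trans (le_trans (ler_norm _) (ler_dnorm N_normlike Dd z1)) => /=.
rewrite /dsum /= (dualZ u1B.1) (dualZ u2B.1) (dualZ v1B.1) (dualZ v2B.1).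
have : al * lam * (2 - e / 2) <= al * lam * (u1 x - u2 x).
  by apply: ler_wpM2l; [rewrite mulr_ge0 | exact: ltW].
have : b * mu * (2 - e / 2) <= b * mu * (v1 y - v2 y).
  by apply: ler_wpM2l; [rewrite mulr_ge0 | exact: ltW].
have : (1 - e / 4) * (2 - e / 2) <= (al * lam + b * mu) * (2 - e / 2).
  by rewrite ler_wpM2r ?ltW //; lra.
(* (1 - e/4) (2 - e/2) = 2 - e + e^2/8 *)
have : 0 <= e * e by rewrite mulr_ge0 ?ltW.
lra.
Qed.

End PSumDual.

Section HahnBanach.
Context (R : realType) (V : lmodType R).

Definition sublinear (q : V -> R) :=
  (forall x y, q (x + y) <= q x + q y) /\ (forall (s : R) x, 0 < s -> q (s *: x) <= s * q x).

Section Sublinear.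
Variable q : V -> R.
Hypothesis q_sub : sublinear q.
Let q_subadd := q_sub.1.
Let q_homo := q_sub.2.

Lemma sublinear0 : q 0 = 0.
Proof.
have two_gt0 : (0 : R) < 2 by [].
have q0_le2 : q 0 <= 2 * q 0 by have := q_homo 0 two_gt0; rewrite scaler0.
have q0_le_half : q 0 <= 2^-1 * q 0.
  by have := @q_homo 2^-1 0; rewrite scaler0 invr_gt0; apply.
lra.
Qed.

Lemma sublinearZ (s : R) x : 0 <= s -> q (s *: x) = s * q x.
Proof.
rewrite le_eqVlt => /orP[/eqP<-|s_gt0]; first by rewrite mul0r scale0r sublinear0.
apply/eqP; rewrite eq_le q_homo //=.
have := @q_homo s^-1 (s *: x); rewrite invr_gt0 scalerA mulVf ?gt_eqF // scale1r.
by rewrite ler_pdivlMl //; apply.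
Qed.

Lemma sublinear_oppN x : - q (- x) <= q x.
Proof. by have := q_subadd x (- x); rewrite subrr sublinear0; lra. Qed.

Definition sublinear_reduce (y : V) (x : V) : R :=
  inf [set q (x + t *: y) - t * q y | t in [set t : R | 0 <= t]].

Variable y : V.
Local Notation r := (sublinear_reduce y).

Lemma sublinear_reduce_le x t : 0 <= t -> r x <= q (x + t *: y) - t * q y.
Proof.
move=> t0; apply: ge_inf; last by exists t.
exists (- q (- x)) => _ [s /= s0 <-].
have := q_subadd (x + s *: y) (- x); rewrite addrC addKr sublinearZ //; lra.
Qed.

Lemma sublinear_reduce_glb x c :
  (forall t, 0 <= t -> c <= q (x + t *: y) - t * q y) -> c <= r x.
Proof.
move=> c_lb; apply: lb_le_inf => [|_ [t /= t0 <-]]; last exact: c_lb.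
by exists (q (x + 0 *: y) - 0 * q y); exists 0 => //=.
Qed.

Lemma sublinear_reduce_leq x : r x <= q x.
Proof. by have := sublinear_reduce_le x (lexx 0); rewrite scale0r addr0 mul0r subr0. Qed.

Lemma sublinear_reduceN : r (- y) <= - q y.
Proof.
by have := sublinear_reduce_le (- y) ler01; rewrite scale1r addNr sublinear0 mul1r sub0r.
Qed.

Lemma sublinear_reduce_sublinear : sublinear r.
Proof.
split=> [x1 x2|s x s_gt0].
  have r_le t1 t2 : 0 <= t1 -> 0 <= t2 ->
      r (x1 + x2) <= (q (x1 + t1 *: y) - t1 * q y) + (q (x2 + t2 *: y) - t2 * q y).
    move=> t10 t20; apply: le_trans (sublinear_reduce_le _ (addr_ge0 t10 t20)) _.
    have := q_subadd (x1 + t1 *: y) (x2 + t2 *: y).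
    by rewrite addrACA -scalerDl mulrDl; lra.
  have r_le2 t2 : 0 <= t2 -> r (x1 + x2) - (q (x2 + t2 *: y) - t2 * q y) <= r x1.
    by move=> t20; apply: sublinear_reduce_glb => t1 t10; have := r_le t1 t2 t10 t20; lra.
  have : r (x1 + x2) - r x1 <= r x2.
    by apply: sublinear_reduce_glb => t2 t20; have := r_le2 t2 t20; lra.
  lra.
suff r_le : s^-1 * r (s *: x) <= r x.
  by have := ler_wpM2l (ltW s_gt0) r_le; rewrite mulrA mulfV ?gt_eqF // mul1r.
apply: sublinear_reduce_glb => t t0.
rewrite -(ler_pM2l s_gt0) mulrA mulfV ?gt_eqF // mul1r.
apply: le_trans (sublinear_reduce_le _ (mulr_ge0 (ltW s_gt0) t0)) _.
by rewrite -scalerA -scalerDr (sublinearZ _ (ltW s_gt0)) mulrBr mulrA.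
Qed.

End Sublinear.

Section Minimal.
Variable p0 : V -> R.

Definition dominated := {q : V -> R | sublinear q /\ forall x, q x <= p0 x}.
Definition dominated_ge : rel dominated := fun a b => `[< forall x, sval b x <= sval a x >].

Lemma dominated_chain_inf (A : set dominated) a0 : A a0 -> total_on A dominated_ge ->
  exists m : dominated, forall s, A s -> dominated_ge s m.
Proof.
move=> Aa0 A_chain; pose m x := inf [set sval s x | s in A].
have m_lb x : has_lbound [set sval s x | s in A].
  exists (- p0 (- x)) => _ [[q [q_sub q_le]] _ <-] /=.
  by apply: le_trans (sublinear_oppN q_sub x); rewrite lerN2 q_le.
have m_le s x : A s -> m x <= sval s x by move=> As; apply: (ge_inf (m_lb x)); exists s.
have m_glb x c : (forall s, A s -> c <= sval s x) -> c <= m x.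
  by move=> c_lb; apply: lb_le_inf => [|_ [s As <-]]; [exists (sval a0 x), a0 | exact: c_lb].
have m_sub : sublinear m.
  split=> [x y|s x s_gt0].
    have m_le2 s1 s2 : A s1 -> A s2 -> m (x + y) <= sval s1 x + sval s2 y.
      move=> As1 As2; have [[q1_add _] _] := proj2_sig s1; have [[q2_add _] _] := proj2_sig s2.
      have := q1_add x y; have := q2_add x y; have := m_le s1 (x + y) As1.
      have := m_le s2 (x + y) As2.
      by have [/asboolP le12|/asboolP le21] := A_chain s1 s2 As1 As2;
        [have := le12 x | have := le21 y]; lra.
    have : m (x + y) - m x <= m y.
      apply: (m_glb) => s2 As2; have : m (x + y) - sval s2 y <= m x.
        by apply: (m_glb) => s1 As1; have := m_le2 s1 s2 As1 As2; lra.
      lra.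
    lra.
  suff m_le_s : s^-1 * m (s *: x) <= m x.
    by have := ler_wpM2l (ltW s_gt0) m_le_s; rewrite mulrA mulfV ?gt_eqF // mul1r.
  apply: (m_glb) => q As; rewrite -(ler_pM2l s_gt0) mulrA mulfV ?gt_eqF // mul1r.
  apply: le_trans (m_le q _ As) _.
  by have [[_ q_homo] _] := proj2_sig q; exact: q_homo.
have m_p0 x : m x <= p0 x.
  by apply: le_trans (m_le a0 x Aa0) _; have [_ q_le] := proj2_sig a0; exact: q_le.
by exists (exist _ m (conj m_sub m_p0)) => s As; apply/asboolP => x; exact: m_le.
Qed.

Lemma exists_minimal_dominated : sublinear p0 -> exists q, premaximal dominated_ge q.
Proof.
move=> p0_sub; have q0 : dominated by exists p0.
apply: (ZL_preorder q0) => [t|a b c /asboolP ab /asboolP bc|A A_chain].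
- by apply/asboolP.
- by apply/asboolP => x; exact: le_trans (bc x) (ab x).
have [[a0 Aa0]|A0] := pselect (exists a, A a); first exact: dominated_chain_inf Aa0 A_chain.
by exists q0 => s As; exfalso; apply: A0; exists s.
Qed.

(* A minimal q below p0 equals each [sublinear_reduce q y], which is odd
   along y; so q is odd, hence additive and linear. *)
Lemma premaximal_dominated_linear (q : dominated) : premaximal dominated_ge q ->
  forall (a : R) u v, sval q (a *: u + v) = a * sval q u + sval q v.
Proof.
case: q => q [q_sub q_le] /= q_min.
have qN y : q (- y) = - q y.
  have r_sub := sublinear_reduce_sublinear q_sub y.
  have r_le x : sublinear_reduce q y x <= p0 x.
    exact: le_trans (sublinear_reduce_leq q_sub y x) (q_le x).
  have /q_min /asboolP /= /(_ (- y)) : dominated_ge (exist _ q (conj q_sub q_le))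
      (exist _ (sublinear_reduce q y) (conj r_sub r_le)).
    by apply/asboolP => x /=; exact: sublinear_reduce_leq.
  have := sublinear_reduceN q_sub y; have := sublinear_oppN q_sub (- y).
  by rewrite opprK; lra.
have qD u v : q (u + v) = q u + q v.
  apply/eqP; rewrite eq_le q_sub.1 /=.
  by have := q_sub.1 (u + v) (- v); rewrite addrK qN; lra.
move=> a u v; rewrite qD; congr (_ + _).
have [a_lt0|a_gt0|->] := ltgtP a 0; last by rewrite scale0r mul0r sublinear0.
  rewrite -(opprK a) scaleNr qN sublinearZ ?oppr_ge0 ?ltW //; ring.
by rewrite sublinearZ ?ltW.
Qed.

End Minimal.
End HahnBanach.

Lemma hahn_banach_norming (R : realType) (X : normedModType R) (x0 : X) :
  exists f : X -> R, [/\ is_dual (fun x : X => `|x|) f, forall x, `|f x| <= `|x| & f x0 = `|x0|].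
Proof.
have norm_sub : sublinear (fun x : X => `|x|).
  by split=> [x y|s x s_gt0]; [exact: ler_normD | rewrite normrZ gtr0_norm].
(* Below the reduction of the norm along x0, f (- x0) <= - `|x0|. *)
have p0_sub := sublinear_reduce_sublinear norm_sub x0.
have [[f [f_sub f_le]] f_min] := exists_minimal_dominated p0_sub.
have f_lin := premaximal_dominated_linear f_min; rewrite /= in f_lin.
have f_norm x : f x <= `|x| := le_trans (f_le x) (sublinear_reduce_leq norm_sub x0 x).
have f0 : f 0 = 0.
  have /eqP := f_lin 1 0 0; rewrite scaler0 addr0 mul1r.
  by rewrite -subr_eq subrr eq_sym => /eqP.
have fN x : f (- x) = - f x.
  by have := f_lin (-1) x 0; rewrite !addr0 scaleN1r f0 addr0 mulN1r.
have f_abs x : `|f x| <= `|x| by rewrite ler_norml f_norm lerNl -fN -normrN f_norm.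
exists f; split => //; last first.
  apply/eqP; rewrite eq_le f_norm /=.
  by have := f_le (- x0); have := sublinear_reduceN norm_sub x0; rewrite fN; lra.
by split => //; exists 1 => x; rewrite mul1r.
Qed.

(* This is where p > 1 is used: the l_p^2 norm is flat at (1, 0). *)
Lemma pnorm2_flat (R : realType) (p : \bar R) : (1%:E < p)%E ->
  forall k : R, 0 < k -> exists2 t, 0 < t <= 1 & pnorm2 p 1 t <= 1 + k * t.
Proof.
case: p => [r||] //= r_gt1 k k_gt0; last first.
  by exists 1; rewrite ?ltr01 ?lexx //= maxxx lerDl mulr1 ltW.
rewrite lte_fin in r_gt1.
have r_gt0 : 0 < r := lt_trans ltr01 r_gt1.
have r1_gt0 : 0 < r - 1 by rewrite subr_gt0.
pose t := Num.min 1 (k `^ (r - 1)^-1).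
have t_gt0 : 0 < t by rewrite lt_min ltr01 powR_gt0.
have t_le1 : t <= 1 by rewrite ge_min lexx.
exists t; first by rewrite t_gt0 t_le1.
have tr_le : t `^ (r - 1) <= k.
  have -> : k = (k `^ (r - 1)^-1) `^ (r - 1).
    by rewrite -powRrM mulVf ?gt_eqF // powRr1 // ltW.
  apply: ge0_ler_powR; rewrite ?nnegrE ?powR_ge0 //; [exact: ltW | exact: ltW |].
  by rewrite ge_min lexx orbT.
rewrite powR1 /=; apply: (le_trans (y := 1 + t `^ r)).
  apply: ler1_powR; first by rewrite lerDl powR_ge0.
  by rewrite invf_le1 // ltW.
rewrite lerD2l -(mulr_powRB1 (ltW t_gt0) r_gt0) mulrC.
by rewrite ler_wpM2r // ltW.
Qed.

Section NonzeroFunctional.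
Context (R : realType) (X : normedModType R).
Local Notation NX := (fun x : X => `|x|).

Lemma wstar_open_nonzero : (exists x : X, x != 0) -> forall U f0,
  wstar_rel_open NX U -> U f0 ->
  exists f1 (s1 : seq X) (e1 : R) (w : X), [/\ 0 < e1, dual_ball NX f1, `|w| <= 1, 0 < f1 w &
    [set g | dual_ball NX g /\ forall x, x \in s1 -> `|g x - f1 x| < e1] `<=` U].
Proof.
move=> [x0 x0_neq0] U f0 Uo Uf0; have f0B := Uo.1 _ Uf0.
have [s [e [e_gt0 sub]]] := Uo.2 _ Uf0.
have [[w [w1 f0w]]|f0_le0] := pselect (exists w : X, `|w| <= 1 /\ 0 < f0 w).
  by exists f0, s, e, w.
have f0_eq0 : forall x, f0 x = 0.
  apply: (dual_nonpos_eq0 (normlike_normr X) f0B.1) => w w1; rewrite leNgt.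
  by apply/negP => f0w; apply: f0_le0; exists w.
have [u0 [u0d u0_le u0x0]] := hahn_banach_norming x0.
have [M M0 u0M] := seq_ubound s (fun x => `|u0 x|).
pose c := Num.min 1 (e / (M + 1)).
have M1_gt0 : 0 < M + 1 by rewrite ltr_wpDl.
have c_gt0 : 0 < c by rewrite lt_min ltr01 divr_gt0.
have cM : c * M < e.
  apply: (le_lt_trans (y := e / (M + 1) * M)).
    by rewrite ler_wpM2r // ge_min lexx orbT.
  by rewrite mulrAC ltr_pdivrMr // ltr_pM2l // ltrDl.
pose f1 x := c * u0 x.
have f1B : dual_ball NX f1.
  split; first exact (is_dualZ (normlike_normr X) c u0d).
  apply: (dnorm_le (normlike_normr X)) => x x1; rewrite normrM gtr0_norm //.
  apply: le_trans (ler_wpM2l (ltW c_gt0) (le_trans (u0_le x) x1)) _.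
  by rewrite mulr1 ge_min lexx.
have f1_near : [set g | dual_ball NX g /\ forall x, x \in s -> `|g x - f0 x| < e] f1.
  split => // x xs; rewrite f0_eq0 subr0 normrM gtr0_norm //.
  by apply: le_lt_trans cM; apply: ler_wpM2l; [exact: ltW | exact: u0M].
have [s1 [e1 [e1_gt0 sub1]]] := (wstar_nbhd_open _ f0 s e).2 _ f1_near.
have x0_gt0 : 0 < `|x0| by rewrite normr_gt0.
exists f1, s1, e1, (`|x0|^-1 *: x0); split => //.
- by rewrite normrZ ger0_norm ?invr_ge0 // mulVf // gt_eqF.
- by rewrite /f1 (dualZ u0d) u0x0 mulVf ?gt_eqF // mulr1.
by move=> g /sub1 /sub.
Qed.

End NonzeroFunctional.

Section PSumSlices.
Context (R : realType) (X Y : normedModType R) (p : \bar R).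
Hypothesis p_gt1 : (1%:E < p)%E.
Let p_ge1 : (1%:E <= p)%E := ltW p_gt1.
Local Notation N := (psum_norm X Y p).
Local Notation NX := (fun x : X => `|x|).
Let N_normlike := normlike_psum X Y p_ge1.
Let NX_normlike := normlike_normr X.

Lemma dual_ball_dsnd_small h x' (k t eta : R) : dual_ball N h -> `|x'| <= 1 ->
  1 - eta < dfst h x' -> 0 < t -> pnorm2 p 1 t <= 1 + k * t ->
  forall y : Y, `|y| <= 1 -> `|dsnd h y| <= k + eta / t.
Proof.
move=> [hd h1] x'1 hx' t_gt0 flat y y1.
have h_le s : `|s| = t -> dfst h x' + s * dsnd h y <= 1 + k * t.
  move=> st; rewrite -[dfst h x']mul1r -(dual_pairZ hd).
  apply: le_trans (ler_norm _) _; apply: le_trans (ler_dnormM N_normlike hd _) _.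
  apply: le_trans (ler_piMl (psum_norm_ge0 p_ge1 _) h1) _.
  rewrite psum_normE /= scale1r normrZ st; apply: le_trans flat.
  apply: (ler_pnorm2 p_ge1) => //; first by rewrite mulr_ge0 // ltW.
  by rewrite ler_piMr // ltW.
have tN : `|- t| = t by rewrite normrN gtr0_norm.
have := h_le t (gtr0_norm t_gt0); have := h_le (- t) tN.
move=> hN hP; rewrite -(ler_pM2l t_gt0) mulrDr mulrCA mulfV ?gt_eqF // mulr1 mulrC.
by have [hy0|hy0] := leP 0 (dsnd h y); [rewrite ger0_norm | rewrite ltr0_norm]; lra.
Qed.

Lemma psum_d2p_dfst_far : wstar_d2p N -> forall eps, 0 < eps -> exists2 eta, 0 < eta &
  forall V f x', wstar_rel_open NX V -> V f -> `|x'| <= 1 -> 1 - eta < f x' ->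
  exists g1 g2, [/\ V g1, V g2 & 2 - eps < dnorm NX (g1 \- g2)].
Proof.
move=> d2pZ eps eps_gt0; pose k := eps / 5.
have k_gt0 : 0 < k by rewrite divr_gt0.
have [t /andP[t_gt0 t_le1] flat] := pnorm2_flat p_gt1 k_gt0.
exists (k * t); first by rewrite mulr_gt0.
move=> V f x' Vo Vf x'1 fx'.
pose V' := V `&` [set g | dual_ball NX g /\ 1 - k * t < g x'].
have V'o : wstar_rel_open NX V' by apply: wstar_openI => //; exact: wstar_slice_open.
have W_open := @wstar_open_pullback _ _ _ N NX (@dfst R X Y) (fun x => (x, 0)) 1 (fun=> 0)
  (fun h x => esym (etrans (addr0 _) (mul1r _))) (dual_ball_dfst p_ge1) V' V'o.
have lift_W : dual_ball N (dsum 1 f 0 (fun _ : Y => 0)) /\ V' (dfst (dsum 1 f 0 (fun _ : Y => 0))).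
  have -> : dfst (dsum 1 f 0 (fun _ : Y => 0)) = f.
    by apply: funext => x; rewrite /dfst /dsum /= mul1r mulr0 addr0.
  split; last by split => //; split; [exact: Vo.1 | exact: fx'].
  apply: dual_ball_dsum => //; [|exact: Vo.1|exact: dual_ball0 (normlike_normr Y)].
  by move=> s u s0 u0; rewrite mul1r mul0r addr0 pnorm2_ge_l.
have [h1 [h2 [[z1 z2] [[h1B [Vh1 [_ h1x']]] [h2B [Vh2 [_ h2x']]] z1_le far]]]] :=
  wstar_d2p_far N_normlike d2pZ W_open lift_W k_gt0.
have z11 : `|z1| <= 1 := le_trans (psum_norm_ge_fst p_ge1 (z1, z2)) z1_le.
have z21 : `|z2| <= 1 := le_trans (psum_norm_ge_snd p_ge1 (z1, z2)) z1_le.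
have small h : dual_ball N h -> 1 - k * t < dfst h x' -> `|dsnd h z2| <= k + k.
  move=> hB hx'; have := dual_ball_dsnd_small hB x'1 hx' t_gt0 flat z21.
  by rewrite mulfK ?gt_eqF.
have split_z h : is_dual N h -> h (z1, z2) = dfst h z1 + dsnd h z2.
  by move=> hd; rewrite {1}(dual_dsum hd) /dsum /= !mul1r.
exists (dfst h1), (dfst h2); split => //.
have Dd := is_dualB NX_normlike (is_dual_dfst p_ge1 h1B.1) (is_dual_dfst p_ge1 h2B.1).
apply: lt_le_trans (le_trans (ler_norm _) (ler_dnorm NX_normlike Dd z11)) => /=.
move: far; rewrite /= (split_z _ h1B.1) (split_z _ h2B.1).
move: (small _ h1B h1x') (small _ h2B h2x'); rewrite !ler_norml => /andP[? ?] /andP[? ?].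
have : k * 5 = eps by rewrite /k mulfVK // pnatr_eq0.
lra.
Qed.

Lemma wstar_open_near_norming : wstar_d2p N -> (exists x : X, x != 0) ->
  forall U f0, wstar_rel_open NX U -> U f0 -> forall eta, 0 < eta ->
  exists f x', [/\ U f, `|x'| <= 1 & 1 - eta < f x'].
Proof.
move=> d2pZ hX U f0 Uo Uf0 eta eta_gt0.
have [f1 [s1 [e1 [w [e1_gt0 f1B w1 f1w sub]]]]] := wstar_open_nonzero hX Uo Uf0.
have f1U : U f1 by apply: sub; split => // x _; rewrite subrr normr0.
pose a := dnorm NX f1.
have a_gt0 : 0 < a := lt_le_trans f1w (le_trans (ler_norm _) (ler_dnorm NX_normlike f1B.1 w1)).
have [a_big|a_small] := ltP (1 - eta) a.
  by have [x' [x'1 f1x']] := dnorm_gt NX_normlike f1B.1 a_big; exists f1, x'.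
have [etaL etaL_gt0 far] := psum_d2p_dfst_far d2pZ (divr_gt0 eta_gt0 (ltr0n _ 2)).
have [uB _] := dual_ball_normalize NX_normlike f1B.1 (lexx a).
have [w0 [w01 uw0]] : exists w0, `|w0| <= 1 /\ 1 - etaL < a^-1 * f1 w0.
  have aL : a * (1 - etaL) < a by rewrite -[ltRHS]mulr1 ltr_pM2l // ltrBlDr ltrDl.
  have [w0 [w01 f1w0]] := dnorm_gt NX_normlike f1B.1 aL.
  by exists w0; rewrite ltr_pdivlMl.
pose V := [set g | dual_ball NX g /\ forall x, x \in s1 -> `|g x - a^-1 * f1 x| < e1 / 4].
have Vu : V (fun x => a^-1 * f1 x).
  by split => // x _; rewrite subrr normr0 divr_gt0.
have [g1 [g2 [[g1B g1s] [g2B g2s] far12]]] :=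
  far V _ _ (wstar_nbhd_open _ _ _ _) Vu w01 uw0.
have psid := is_dualB NX_normlike g1B.1 g2B.1.
have [t /andP[t0 t1] [fd f_norm1]] :
    exists2 t, 0 <= t <= 1 & is_dual NX (fun x => f1 x + t * (g1 \- g2) x) /\
      dnorm NX (fun x => f1 x + t * (g1 \- g2) x) = 1.
  apply: (dnorm_ivt NX_normlike f1B.1 psid); rewrite -/a; lra.
have fU : U (fun x => f1 x + t * (g1 \- g2) x).
  apply: sub; split; first by split; [exact: fd | rewrite f_norm1].
  move=> x xs; rewrite addrC addKr normrM ger0_norm //.
  apply: le_lt_trans (ler_piMl (normr_ge0 _) t1) _.
  have := g1s x xs; have := g2s x xs; rewrite /=.
  have : `|g1 x - g2 x| <= `|g1 x - a^-1 * f1 x| + `|g2 x - a^-1 * f1 x|.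
    by rewrite -(normrN (g2 x - _)) opprB; apply: le_trans (ler_normD _ _); rewrite addrA subrK.
  lra.
have [|x' [x'1 fx']] := dnorm_gt NX_normlike fd (t := 1 - eta); first by rewrite f_norm1; lra.
by exists (fun x => f1 x + t * (g1 \- g2) x), x'.
Qed.

Lemma wstar_d2p_psum_fst : (exists x : X, x != 0) -> wstar_d2p N -> wstar_d2p NX.
Proof.
move=> hX d2pZ; apply: (wstar_d2p_intro NX_normlike) => U f0 Uo Uf0 d d_gt0.
have [eta eta_gt0 far] := psum_d2p_dfst_far d2pZ d_gt0.
have [f [x' [Uf x'1 fx']]] := wstar_open_near_norming d2pZ hX Uo Uf0 eta_gt0.
have [g1 [g2 [Ug1 Ug2 far12]]] := far U f x' Uo Uf x'1 fx'.
by exists g1, g2; split => //; exact: ltW.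
Qed.

End PSumSlices.

Unset Implicit Arguments.

Theorem corollary4p7 (R : realType) (X Y : completeNormedModType R)
  (hX : exists x : X, x != 0) (hY : exists y : Y, y != 0) :
  (wstar_d2p (fun x : X => `|x|) ->
     wstar_d2p (psum_norm X Y 1%:E)) /\
  (forall p : \bar R, (1%:E < p)%E ->
     wstar_d2p (fun x : X => `|x|) -> wstar_d2p (fun y : Y => `|y|) ->
     wstar_d2p (psum_norm X Y p)) /\
  (forall p : \bar R, (1%:E < p)%E ->
     wstar_d2p (psum_norm X Y p) -> wstar_d2p (fun x : X => `|x|)).
Proof.
split; first exact: wstar_d2p_psum1.
split=> p p_gt1; first exact: (wstar_d2p_psum (ltW p_gt1)).
exact: (wstar_d2p_psum_fst p_gt1 hX).
Qed.
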